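(* For an almost contact metric manifold $\mathcal M$ with structure $(\phi,\xi,\eta,g)$ the following are equivalent: (1) $\mathcal M$ is a CR-manifold and $h=0$; (2) $\mathcal M$ is $\eta$-normal and $h=0$; (3) $\mathcal M$ is normal, i.e. $N^{(1)}=0$ identically.
   Context: Almost contact metric structure $(\phi,\xi,\eta,g)$: $\phi^2=-\mathrm{Id}+\eta\otimes\xi$, $\eta(\xi)=1$, $g(\phi X,\phi Y)=g(X,Y)-\eta(X)\eta(Y)$. Convention $2d\eta(X,Y)=X\eta(Y)-Y\eta(X)-\eta([X,Y])$. $[\phi,\phi](X,Y)=\phi^2[X,Y]+[\phi X,\phi Y]-\phi[\phi X,Y]-\phi[X,\phi Y]$, $N^{(1)}=[\phi,\phi]+2d\eta\otimes\xi$; $h=\tfrac12\mathcal L_\xi\phi$. $\eta$-normal: $N^{(1)}(X,Y)=0$ whenever $\eta(X)=\eta(Y)=0$. CR-manifold: for all $X,Y$ with $\eta(X)=\eta(Y)=0$ there is $Z$ with $\eta(Z)=0$ and $[X-i\phi X,Y-i\phi Y]=Z-i\phi Z$. *)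

From HB Require Import structures.
From mathcomp Require Import all_boot all_order all_algebra.
From mathcomp Require Import reals.
Set Implicit Arguments. Unset Strict Implicit. Unset Printing Implicit Defensive.
Import Order.TTheory GRing.Theory Num.Theory.
Local Open Scope ring_scope.

(* The "manifold": a set of points M, the algebra C of smooth real functions
   (an R-algebra faithfully represented by real-valued functions on M), and the
   C-module X of vector fields, with the action of vector fields on functions
   (X f) and the Lie bracket of vector fields. *)
Record manifold_data (R : realType) (M : Type) (C : comAlgType R)
    (X : lmodType C) := ManifoldData {
  ev : C -> M -> R;
  act : X -> C -> C;
  br : X -> X -> X;
  ev_inj : injective ev;
  ev_add : forall f g p, ev (f + g) p = ev f p + ev g p;
  ev_mul : forall f g p, ev (f * g) p = ev f p * ev g p;
  ev_scale : forall (r : R) f p, ev (r *: f) p = r * ev f p;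
  ev_one : forall p, ev 1 p = 1;
  act_addl : forall U V f, act (U + V) f = act U f + act V f;
  act_scalel : forall (a : C) U f, act (a *: U) f = a * act U f;
  act_addr : forall U f g, act U (f + g) = act U f + act U g;
  act_scaler : forall U (r : R) f, act U (r *: f) = r *: act U f;
  act_mulr : forall U f g, act U (f * g) = act U f * g + f * act U g;
  br_anti : forall U V, br U V = - br V U;
  br_addr : forall U V W, br U (V + W) = br U V + br U W;
  br_leibniz : forall U V (f : C), br U (f *: V) = act U f *: V + f *: br U V;
  br_jacobi : forall U V W,
    br U (br V W) + br V (br W U) + br W (br U V) = 0;
  br_act : forall U V f, act (br U V) f = act U (act V f) - act V (act U f)
}.

Record acm_structure (R : realType) (M : Type) (C : comAlgType R)
    (X : lmodType C) (Mf : manifold_data M X) := ACM {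
  phi : X -> X;
  xi : X;
  eta : X -> C;
  g : X -> X -> C;
  phi_add : forall U V, phi (U + V) = phi U + phi V;
  phi_scale : forall (a : C) U, phi (a *: U) = a *: phi U;
  eta_add : forall U V, eta (U + V) = eta U + eta V;
  eta_scale : forall (a : C) U, eta (a *: U) = a * eta U;
  g_sym : forall U V, g U V = g V U;
  g_add : forall U V W, g (U + V) W = g U W + g V W;
  g_scale : forall (a : C) U V, g (a *: U) V = a * g U V;
  g_pos : forall U p, 0 <= ev Mf (g U U) p;
  g_definite : forall U, g U U = 0 -> U = 0;
  phi2 : forall U, phi (phi U) = - U + eta U *: xi;
  eta_xi : eta xi = 1;
  g_compat : forall U V, g (phi U) (phi V) = g U V - eta U * eta V
}.

Section Tensors.
Variables (R : realType) (M : Type) (C : comAlgType R) (X : lmodType C)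
  (Mf : manifold_data M X) (S : acm_structure Mf).

Local Notation "[ U , V ]" := (br Mf U V).
Local Notation phi := (phi S).
Local Notation eta := (eta S).
Local Notation xi := (xi S).

Definition two_deta (U V : X) : C :=
  act Mf U (eta V) - act Mf V (eta U) - eta [U, V].

Definition nijenhuis (U V : X) : X :=
  phi (phi [U, V]) + [phi U, phi V] - phi [phi U, V] - phi [U, phi V].

Definition N1 (U V : X) : X := nijenhuis U V + two_deta U V *: xi.

(* h = 1/2 L_xi phi, (L_xi phi) U = [xi, phi U] - phi [xi, U] *)
Definition h (U : X) : X :=
  ((2 : R)^-1)%:A *: ([xi, phi U] - phi [xi, U]).

Definition h_zero : Prop := forall U, h U = 0.

Definition normal : Prop := forall U V, N1 U V = 0.

Definition eta_normal : Prop :=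
  forall U V, eta U = 0 -> eta V = 0 -> N1 U V = 0.

(* Complexified vector fields A + iB are represented by pairs (A, B); the
   bracket is extended complex-bilinearly:
   [A + iB, C + iD] = ([A,C] - [B,D]) + i([A,D] + [B,C]). *)
Definition cbr (P Q : X * X) : X * X :=
  ([P.1, Q.1] - [P.2, Q.2], [P.1, Q.2] + [P.2, Q.1]).

Definition hol (U : X) : X * X := (U, - phi U).

Definition CR_manifold : Prop :=
  forall U V, eta U = 0 -> eta V = 0 ->
    exists Z, eta Z = 0 /\ cbr (hol U) (hol V) = hol Z.

End Tensors.

(* Proof outline.
   - Basic identities: phi xi = 0 and eta o phi = 0 (computing phi^3 in two
     ways; the ring of functions has no nonzero element of square zero), so
     phi^2 = -1 on the horizontal distribution ker eta.
   - N1 is C-linear in its second argument and skew-symmetric, hence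
     determined by its values on horizontal pairs and on pairs (xi, V).
   - On horizontal U, V one has N1 U V = -Re - phi Im, where Re + i (-Im) is
     the complex bracket [U - i phi U, V - i phi V]; this gives (1) <-> (2)
     once h = 0 is added on both sides.
   - h = 0 says that phi commutes with [xi, -]; it is equivalent to
     N1 xi V = 0 for all V.  Together with eta-normality and the
     decomposition V = (V - eta V xi) + eta V xi this gives (2) <-> (3). *)
From Pilot Require Import Defs.
From HB Require Import structures.
From mathcomp Require Import all_boot all_order all_algebra.
From mathcomp Require Import boolp reals ring.
Set Implicit Arguments. Unset Strict Implicit. Unset Printing Implicit Defensive.
Import Order.TTheory GRing.Theory Num.Theory.
Local Open Scope ring_scope.

Lemma algZ_eq0 (R : fieldType) (A : lalgType R) (V : lmodType A) (r : R) (w : V) :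
  r != 0 -> r%:A *: w = 0 -> w = 0.
Proof.
move=> r_neq0 rw0; rewrite -[w]scale1r -(scale1r (1 : A)) -(mulVf r_neq0).
by rewrite -scalerA -mulr_algl -scalerA rw0 scaler0.
Qed.

(* In characteristic zero a vector equal to its opposite vanishes; this is
   what makes skew-symmetric tensors alternating. *)
Lemma eq_opp_eq0 (R : numFieldType) (A : lalgType R) (V : lmodType A) (w : V) :
  w = - w -> w = 0.
Proof.
move=> w_opp; apply: (@algZ_eq0 R A V 2); first by rewrite pnatr_eq0.
by rewrite -in_algE rmorph_nat scaler_nat mulr2n {2}w_opp subrr.
Qed.

Lemma add_sub4ACA (V : zmodType) (a b c d a' b' c' d' : V) :
  (a + a') + (b + b') - (c + c') - (d + d') = (a + b - c - d) + (a' + b' - c' - d').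
Proof. by rewrite !opprD (addrACA a) (addrACA (a + b)) (addrACA (a + b - c)). Qed.

Lemma zmod_morphism_of_add (U V : zmodType) (f : U -> V) :
  {morph f : x y / x + y} -> zmod_morphism f.
Proof. by move=> fD x y; apply: (addIr (f y)); rewrite -fD !subrK. Qed.

Section ManifoldData.
Variables (R : realType) (M : Type) (C : comAlgType R) (X : lmodType C)
  (Mf : manifold_data M X).
Local Notation "[ U , V ]" := (br Mf U V).
Local Notation act := (act Mf).

(* Smooth functions are real valued, so a function whose square vanishes is
   zero. *)
Lemma ev_mul_self_eq0 (a : C) : a * a = 0 -> a = 0.
Proof.
move=> aa0; apply: (@ev_inj _ _ _ _ Mf); apply: funext => p.
have ev0 q : ev Mf 0 q = 0 by apply: (addrI (ev Mf 0 q)); rewrite -ev_add !addr0.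
have : ev Mf a p * ev Mf a p = 0 by rewrite -ev_mul aa0 ev0.
by move/eqP; rewrite mulf_eq0 orbb ev0 => /eqP.
Qed.

HB.instance Definition _ (U : X) :=
  GRing.isZmodMorphism.Build C C (act U) (zmod_morphism_of_add (act_addr Mf U)).
HB.instance Definition _ (U : X) :=
  GRing.isZmodMorphism.Build X X (br Mf U) (zmod_morphism_of_add (br_addr Mf U)).

(* A vector field is a derivation, so it kills constants. *)
Lemma act1 U : act U 1 = 0.
Proof.
have act11 := act_mulr Mf U 1 1; rewrite !mulr1 mul1r in act11.
by apply: (addrI (act U 1)); rewrite addr0 -act11.
Qed.

Lemma brNl U V : [- U, V] = - [U, V].
Proof. by rewrite br_anti raddfN opprK -br_anti. Qed.

Lemma br0l U : [0, U] = 0.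
Proof. by rewrite br_anti raddf0 oppr0. Qed.
End ManifoldData.

Section AlmostContactMetric.
Variables (R : realType) (M : Type) (C : comAlgType R) (X : lmodType C)
  (Mf : manifold_data M X) (S : acm_structure Mf).
Local Notation "[ U , V ]" := (br Mf U V).
Local Notation act := (act Mf).
Local Notation phi := (phi S).
Local Notation eta := (Defs.eta S).
Local Notation xi := (xi S).

HB.instance Definition _ :=
  GRing.isZmodMorphism.Build X X phi (zmod_morphism_of_add (phi_add S)).
HB.instance Definition _ :=
  GRing.isZmodMorphism.Build X C eta (zmod_morphism_of_add (eta_add S)).

(* phi^3 U computed as phi (phi^2 U) and as phi^2 (phi U). *)
Lemma eta_phi_scale_xi U : eta (phi U) *: xi = eta U *: phi xi.
Proof.
have := congr1 phi (phi2 S U).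
by rewrite phi2 raddfD raddfN /= phi_scale => /addrI.
Qed.

(* With a := eta (phi xi) one gets phi xi = a xi and 0 = phi^2 xi = a^2 xi. *)
Lemma phi_xi : phi xi = 0.
Proof.
have xi_phi := eta_phi_scale_xi xi; rewrite eta_xi scale1r in xi_phi.
set a := eta (phi xi) in xi_phi.
suff a0 : a = 0 by rewrite -xi_phi a0 scale0r.
have : phi (phi xi) = 0 by rewrite phi2 eta_xi scale1r addNr.
rewrite -xi_phi phi_scale -xi_phi scalerA => /(congr1 eta).
by rewrite eta_scale eta_xi mulr1 raddf0 => /(ev_mul_self_eq0 Mf).
Qed.

Lemma eta_phi U : eta (phi U) = 0.
Proof.
have := congr1 eta (eta_phi_scale_xi U).
by rewrite phi_xi scaler0 raddf0 eta_scale eta_xi mulr1.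
Qed.

Lemma phi2_hor U : eta U = 0 -> phi (phi U) = - U.
Proof. by move=> etaU0; rewrite phi2 etaU0 scale0r addr0. Qed.

Lemma phi_eq0_hor Y : eta Y = 0 -> phi Y = 0 -> Y = 0.
Proof.
by move=> etaY0 phiY0; rewrite -[Y]opprK -(phi2_hor etaY0) phiY0 raddf0 oppr0.
Qed.

Lemma eta_hor_part U : eta (U - eta U *: xi) = 0.
Proof. by rewrite raddfB /= eta_scale eta_xi mulr1 subrr. Qed.

(* The Nijenhuis torsion and 2 d eta are C-linear in the second argument:
   the Leibniz terms of the brackets cancel. *)
Lemma nijenhuis_scale U V (a : C) :
  nijenhuis S U (a *: V) = a *: nijenhuis S U V.
Proof.
rewrite /nijenhuis !phi_scale !br_leibniz !phi_add !phi_scale.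
by rewrite add_sub4ACA addrK subrr add0r !scalerBr scalerDr.
Qed.

Lemma nijenhuis_add U V W :
  nijenhuis S U (V + W) = nijenhuis S U V + nijenhuis S U W.
Proof. by rewrite /nijenhuis !raddfD /= -!opprD add_sub4ACA. Qed.

Lemma two_deta_scale U V (a : C) : two_deta S U (a *: V) = a * two_deta S U V.
Proof.
rewrite /two_deta eta_scale act_mulr act_scalel br_leibniz raddfD /= !eta_scale.
ring.
Qed.

Lemma two_deta_add U V W : two_deta S U (V + W) = two_deta S U V + two_deta S U W.
Proof. rewrite /two_deta !raddfD /= act_addl raddfD /=; ring. Qed.

Lemma N1_scale U V (a : C) : N1 S U (a *: V) = a *: N1 S U V.
Proof. by rewrite /N1 nijenhuis_scale two_deta_scale -scalerA -scalerDr. Qed.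

Lemma N1_add U V W : N1 S U (V + W) = N1 S U V + N1 S U W.
Proof. by rewrite /N1 nijenhuis_add two_deta_add scalerDl addrACA. Qed.

Lemma N1_anti U V : N1 S V U = - N1 S U V.
Proof.
rewrite /N1 /nijenhuis /two_deta (br_anti Mf V U) (br_anti Mf (phi V) (phi U)).
rewrite (br_anti Mf (phi V) U) (br_anti Mf V (phi U)) !raddfN /=.
rewrite opprD -scaleNr; congr (_ + _ *: _); last by ring.
by rewrite !opprD !opprK addrAC.
Qed.

Lemma N1_self U : N1 S U U = 0.
Proof. by apply: eq_opp_eq0; rewrite -{1}N1_anti. Qed.

Lemma N1_split_r U V : N1 S U V = N1 S U (V - eta V *: xi) + eta V *: N1 S U xi.
Proof. by rewrite -N1_scale -N1_add subrK. Qed.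

(* Real and imaginary parts of [U - i phi U, V - i phi V] (the imaginary
   part is - br_im U V). *)
Definition br_re U V := [U, V] - [phi U, phi V].
Definition br_im U V := [phi U, V] + [U, phi V].

Lemma cbr_hol U V : cbr Mf (hol S U) (hol S V) = (br_re U V, - br_im U V).
Proof.
rewrite /cbr /hol /br_re /br_im /= !brNl !(raddfN (br Mf _)) /= opprK.
by rewrite (addrC [phi U, V]) opprD.
Qed.

Lemma N1_hor U V : eta U = 0 -> eta V = 0 ->
  N1 S U V = - br_re U V - phi (br_im U V).
Proof.
move=> etaU0 etaV0.
rewrite /N1 /nijenhuis /two_deta /br_re /br_im etaU0 etaV0 !raddf0 /=.
rewrite phi2 !add0r scaleNr (raddfD phi) /= opprB opprD.
rewrite (addrAC (- _) (_ *: xi)) (addrAC _ (_ *: xi) (- _)) (addrAC _ (_ *: xi) (- _)).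
by rewrite addrK addrA (addrC (- [U, V])).
Qed.

Lemma br_re_phi U V : eta U = 0 -> br_re (phi U) V = br_im U V.
Proof. by move=> etaU0; rewrite /br_re /br_im phi2_hor // brNl opprK. Qed.

(* eta-normality yields Re = - phi Im; applied to (phi U, V) it also shows
   that Im is horizontal, so Z := Re satisfies the CR condition. *)
Lemma CR_of_eta_normal : eta_normal S -> CR_manifold S.
Proof.
move=> etaN U V etaU0 etaV0.
have re_eq W : eta W = 0 -> br_re W V = - phi (br_im W V).
  move=> etaW0; apply/eqP; rewrite -subr_eq0 opprK -[_ + _]opprK opprD -N1_hor //.
  by rewrite etaN // oppr0.
have eta_im : eta (br_im U V) = 0.
  rewrite -br_re_phi // re_eq ?eta_phi //.
  by rewrite (raddfN eta) /= eta_phi oppr0.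
exists (br_re U V); split; first by rewrite re_eq // (raddfN eta) /= eta_phi oppr0.
by rewrite cbr_hol re_eq // /hol (raddfN phi) /= opprK phi2 eta_im scale0r addr0.
Qed.

(* The CR condition gives Re = Z and Im = phi Z with Z horizontal. *)
Lemma eta_normal_of_CR : CR_manifold S -> eta_normal S.
Proof.
move=> CR U V etaU0 etaV0; have [Z [etaZ0]] := CR U V etaU0 etaV0.
rewrite cbr_hol /hol N1_hor // => -[-> /oppr_inj ->].
by rewrite phi2_hor // opprK addNr.
Qed.

Lemma h_zero_iff : h_zero S <-> forall V, [xi, phi V] = phi [xi, V].
Proof.
split=> [hz V | comm U]; last by rewrite /h comm subrr scaler0.
apply: subr0_eq; apply: (@algZ_eq0 R C X 2^-1); last exact: hz.
by rewrite invr_eq0 pnatr_eq0.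
Qed.

(* Since eta o phi = 0, the xi-component of N1 only sees [phi U, phi V]
   and 2 d eta. *)
Lemma eta_N1 U V : eta (N1 S U V) = eta [phi U, phi V] + two_deta S U V.
Proof.
rewrite /N1 /nijenhuis !(raddfD eta) !(raddfN eta) /= !eta_phi eta_scale eta_xi.
by rewrite mulr1 add0r oppr0 !addr0.
Qed.

Lemma nijenhuis_xi V : nijenhuis S xi V = phi (phi [xi, V] - [xi, phi V]).
Proof. by rewrite /nijenhuis phi_xi !br0l raddf0 !addr0 subr0 (raddfB phi). Qed.

Lemma two_deta_xi V : two_deta S xi V = act xi (eta V) - eta [xi, V].
Proof. by rewrite /two_deta eta_xi act1 subr0. Qed.

(* Normality at (xi, V): the eta-component gives 2 d eta (xi, -) = 0, and
   then the vanishing horizontal vector phi [xi, V] - [xi, phi V] is killed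
   by phi. *)
Lemma h_zero_of_normal : normal S -> h_zero S.
Proof.
move=> normalS; apply/h_zero_iff => V.
have deta0 W : two_deta S xi W = 0.
  by have := congr1 eta (normalS xi W); rewrite eta_N1 phi_xi br0l raddf0 add0r.
have etaD : eta [xi, phi V] = 0.
  by move/eqP: (deta0 (phi V)); rewrite two_deta_xi eta_phi raddf0 sub0r oppr_eq0 => /eqP.
have hor : eta (phi [xi, V] - [xi, phi V]) = 0.
  by rewrite (raddfB eta) /= eta_phi etaD subr0.
have := normalS xi V; rewrite /N1 deta0 scale0r addr0 nijenhuis_xi.
by move=> /(phi_eq0_hor hor) /subr0_eq ->.
Qed.

(* Conversely h = 0 makes [xi, -] preserve ker eta, and both parts of
   N1 xi V vanish for horizontal V. *)
Lemma N1_xi_hor : h_zero S -> forall W, eta W = 0 -> N1 S xi W = 0.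
Proof.
move=> /h_zero_iff comm W etaW0.
have etaD : eta [xi, W] = 0.
  rewrite -[W]opprK -(phi2_hor etaW0) (raddfN (br Mf _)) /= comm.
  by rewrite (raddfN eta) /= eta_phi oppr0.
rewrite /N1 nijenhuis_xi comm subrr raddf0 two_deta_xi etaW0 raddf0 etaD.
by rewrite subrr scale0r addr0.
Qed.

Lemma N1_xi : h_zero S -> forall V, N1 S xi V = 0.
Proof.
move=> hz V.
by rewrite N1_split_r N1_self scaler0 addr0 (N1_xi_hor hz) // eta_hor_part.
Qed.

Lemma normal_of_parts :
  eta_normal S -> (forall V, N1 S xi V = 0) -> normal S.
Proof.
move=> etaN xiN U V.
have N1_r_xi W : N1 S W xi = 0 by rewrite N1_anti xiN oppr0.
rewrite N1_anti N1_split_r N1_r_xi scaler0 addr0 N1_anti N1_split_r N1_r_xi.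
by rewrite scaler0 addr0 etaN ?eta_hor_part // !oppr0.
Qed.
End AlmostContactMetric.

Theorem mainTheorem3 (R : realType) (M : Type) (C : comAlgType R)
    (X : lmodType C) (Mf : manifold_data M X) (S : acm_structure Mf) :
  ((CR_manifold S /\ h_zero S) <-> (eta_normal S /\ h_zero S)) /\
  ((eta_normal S /\ h_zero S) <-> normal S).
Proof.
split; split.
- by case=> CR hz; split=> //; apply: eta_normal_of_CR.
- by case=> etaN hz; split=> //; apply: CR_of_eta_normal.
- by case=> etaN hz; apply: normal_of_parts etaN (N1_xi hz).
- move=> normalS; split; last exact: h_zero_of_normal.
  by move=> U V _ _; apply: normalS.
Qed.
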